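(* Let $\Omega:=\{(z_1,z_2)\in\mathbb{R}^2: z_1>0\}$ and define on $\Omega$ the vector fields \[ r_1(z_1,z_2)=\Big(\tfrac{z_2-\sqrt{z_2^2+4z_1}}{2},\,1\Big),\qquad r_2(z_1,z_2)=\Big(\tfrac{z_2+\sqrt{z_2^2+4z_1}}{2},\,1\Big). \] There exists a global diffeomorphism $w=(w_1,w_2):\Omega\to w(\Omega)\subset\mathbb{R}^2$ such that on $\Omega$, \[ \nabla w_i\cdot r_i=0\quad(i=1,2),\qquad \frac{\partial w_1}{\partial z_1}>0,\qquad \frac{\partial w_2}{\partial z_1}<0. \]
   Context: $r_1,r_2$ are the eigenvectors of the matrix $\begin{pmatrix} z_2 & z_1\\ 1 & 0\end{pmatrix}$ corresponding to the eigenvalues $\frac{z_2\mp\sqrt{z_2^2+4z_1}}{2}$. *)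

From Stdlib Require Import Reals.
From Coquelicot Require Import Coquelicot.
Open Scope R_scope.

Definition Omega (z : R * R) : Prop := 0 < fst z.

Definition lam1 (z1 z2 : R) : R := (z2 - sqrt (z2 ^ 2 + 4 * z1)) / 2.
Definition lam2 (z1 z2 : R) : R := (z2 + sqrt (z2 ^ 2 + 4 * z1)) / 2.
Definition r1 (z1 z2 : R) : R * R := (lam1 z1 z2, 1).
Definition r2 (z1 z2 : R) : R * R := (lam2 z1 z2, 1).

Definition pd1 (f : R -> R -> R) (x y : R) : R := Derive (fun t => f t y) x.
Definition pd2 (f : R -> R -> R) (x y : R) : R := Derive (fun t => f x t) y.

Definition grad_dot (f : R -> R -> R) (x y : R) (v : R * R) : R :=
  pd1 f x y * fst v + pd2 f x y * snd v.

Definition C1_on (U : R * R -> Prop) (f : R -> R -> R) : Prop :=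
  forall x y, U (x, y) ->
    ex_derive (fun t => f t y) x /\ ex_derive (fun t => f x t) y /\
    continuous (fun p : R * R => pd1 f (fst p) (snd p)) (x, y) /\
    continuous (fun p : R * R => pd2 f (fst p) (snd p)) (x, y).

Definition image2 (U : R * R -> Prop) (w1 w2 : R -> R -> R) (y : R * R) : Prop :=
  exists z, U z /\ y = (w1 (fst z) (snd z), w2 (fst z) (snd z)).

Definition diffeo_onto_image (U : R * R -> Prop) (w1 w2 : R -> R -> R) : Prop :=
  open U /\ C1_on U w1 /\ C1_on U w2 /\ open (image2 U w1 w2) /\
  exists g1 g2 : R -> R -> R,
    C1_on (image2 U w1 w2) g1 /\ C1_on (image2 U w1 w2) g2 /\
    (forall z, U z ->
       g1 (w1 (fst z) (snd z)) (w2 (fst z) (snd z)) = fst z /\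
       g2 (w1 (fst z) (snd z)) (w2 (fst z) (snd z)) = snd z) /\
    (forall y, image2 U w1 w2 y ->
       U (g1 (fst y) (snd y), g2 (fst y) (snd y)) /\
       w1 (g1 (fst y) (snd y)) (g2 (fst y) (snd y)) = fst y /\
       w2 (g1 (fst y) (snd y)) (g2 (fst y) (snd y)) = snd y).

From Stdlib Require Import Reals Lra.
From Coquelicot Require Import Coquelicot.
Open Scope R_scope.

(* On Omega the eigenvalues satisfy lam1 < 0 < lam2; write lam1 = - p^2 and
   lam2 = q^2 with p, q > 0.  Then z1 = p^2 q^2 and z2 = q^2 - p^2, so (p, q)
   identifies Omega with the open quadrant.  Take w2 + i w1 := (q + i p)^3.
   One computes dw1/dz1 = 3/(2p) and dw1/dz2 = 3p/2, hence
   grad w1 . r1 = 3/(2p) (-p^2) + 3p/2 = 0, and symmetrically for w2.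
   Cubing is injective on the open quadrant and maps it onto the plane minus
   the closed sector {Re >= 0, Im <= 0}; its inverse there is the polar cube
   root, whose argument is given by a half-angle formula with atan, so the
   inverse is explicit and C^1. *)

Definition has_C1_partials (U : R * R -> Prop) (f fx fy : R -> R -> R) : Prop :=
  forall x y, U (x, y) ->
    is_derive (fun t => f t y) x (fx x y) /\ is_derive (fun t => f x t) y (fy x y) /\
    continuous (fun p : R * R => f (fst p) (snd p)) (x, y) /\
    continuous (fun p : R * R => fx (fst p) (snd p)) (x, y) /\
    continuous (fun p : R * R => fy (fst p) (snd p)) (x, y).

(* [apply ex_derive_continuous] cannot infer the normed-module structures on R -> R. *)
Lemma ex_derive_continuous_R (h : R -> R) x : ex_derive h x -> continuous h x.
Proof. intros Hh; exact (ex_derive_continuous h x Hh). Qed.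

Section C1_calculus.
Variable U : R * R -> Prop.
Implicit Types f g fx fy gx gy : R -> R -> R.

Lemma C1_const c : has_C1_partials U (fun _ _ => c) (fun _ _ => 0) (fun _ _ => 0).
Proof.
  intros x y _; refine (conj _ (conj _ (conj _ (conj _ _))));
    try apply continuous_const; apply (is_derive_const c).
Qed.

Lemma C1_fst : has_C1_partials U (fun x _ => x) (fun _ _ => 1) (fun _ _ => 0).
Proof.
  intros x y _; refine (conj _ (conj _ (conj _ (conj _ _))));
    try apply continuous_const.
  - apply (is_derive_id x).
  - apply (is_derive_const x).
  - apply continuous_fst.
Qed.

Lemma C1_snd : has_C1_partials U (fun _ y => y) (fun _ _ => 0) (fun _ _ => 1).
Proof.
  intros x y _; refine (conj _ (conj _ (conj _ (conj _ _))));
    try apply continuous_const.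
  - apply (is_derive_const y).
  - apply (is_derive_id y).
  - apply continuous_snd.
Qed.

Lemma C1_add f fx fy g gx gy :
  has_C1_partials U f fx fy -> has_C1_partials U g gx gy ->
  has_C1_partials U (fun x y => f x y + g x y)
    (fun x y => fx x y + gx x y) (fun x y => fy x y + gy x y).
Proof.
  intros Hf Hg x y Hxy.
  destruct (Hf x y Hxy) as (fdx & fdy & fc & fxc & fyc).
  destruct (Hg x y Hxy) as (gdx & gdy & gc & gxc & gyc).
  refine (conj _ (conj _ (conj _ (conj _ _)))).
  - exact (is_derive_plus _ _ _ _ _ fdx gdx).
  - exact (is_derive_plus _ _ _ _ _ fdy gdy).
  - exact (continuous_plus _ _ _ fc gc).
  - exact (continuous_plus _ _ _ fxc gxc).
  - exact (continuous_plus _ _ _ fyc gyc).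
Qed.

Lemma C1_mul f fx fy g gx gy :
  has_C1_partials U f fx fy -> has_C1_partials U g gx gy ->
  has_C1_partials U (fun x y => f x y * g x y)
    (fun x y => fx x y * g x y + f x y * gx x y)
    (fun x y => fy x y * g x y + f x y * gy x y).
Proof.
  intros Hf Hg x y Hxy.
  destruct (Hf x y Hxy) as (fdx & fdy & fc & fxc & fyc).
  destruct (Hg x y Hxy) as (gdx & gdy & gc & gxc & gyc).
  refine (conj _ (conj _ (conj _ (conj _ _)))).
  - exact (is_derive_mult _ _ _ _ _ fdx gdx Rmult_comm).
  - exact (is_derive_mult _ _ _ _ _ fdy gdy Rmult_comm).
  - exact (continuous_mult _ _ _ fc gc).
  - exact (continuous_plus _ _ _ (continuous_mult _ _ _ fxc gc) (continuous_mult _ _ _ fc gxc)).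
  - exact (continuous_plus _ _ _ (continuous_mult _ _ _ fyc gc) (continuous_mult _ _ _ fc gyc)).
Qed.

Lemma C1_comp f fx fy (h h' : R -> R) :
  has_C1_partials U f fx fy ->
  (forall x y, U (x, y) -> is_derive h (f x y) (h' (f x y)) /\ continuous h' (f x y)) ->
  has_C1_partials U (fun x y => h (f x y))
    (fun x y => h' (f x y) * fx x y) (fun x y => h' (f x y) * fy x y).
Proof.
  intros Hf Hh x y Hxy.
  destruct (Hf x y Hxy) as (fdx & fdy & fc & fxc & fyc).
  destruct (Hh x y Hxy) as [hd hc].
  assert (hc' := continuous_comp _ _ _ fc hc).
  refine (conj _ (conj _ (conj _ (conj _ _)))).
  - rewrite Rmult_comm; exact (is_derive_comp _ _ _ _ _ hd fdx).
  - rewrite Rmult_comm; exact (is_derive_comp _ _ _ _ _ hd fdy).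
  - exact (continuous_comp _ _ _ fc (ex_derive_continuous h _ (ex_intro _ _ hd))).
  - exact (continuous_mult _ _ _ hc' fxc).
  - exact (continuous_mult _ _ _ hc' fyc).
Qed.

Lemma C1_comp_global f fx fy (h h' : R -> R) :
  has_C1_partials U f fx fy ->
  (forall t, is_derive h t (h' t)) -> (forall t, continuous h' t) ->
  has_C1_partials U (fun x y => h (f x y))
    (fun x y => h' (f x y) * fx x y) (fun x y => h' (f x y) * fy x y).
Proof. intros Hf Hd Hc; apply C1_comp; auto. Qed.

Lemma C1_opp f fx fy : has_C1_partials U f fx fy ->
  has_C1_partials U (fun x y => - f x y)
    (fun x y => -1 * fx x y) (fun x y => -1 * fy x y).
Proof.
  intros Hf; apply (C1_comp_global f fx fy Ropp (fun _ => -1)); auto.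
  - intros t; auto_derive; auto; ring.
  - intros t; apply continuous_const.
Qed.

Lemma C1_pow f fx fy n : has_C1_partials U f fx fy ->
  has_C1_partials U (fun x y => f x y ^ n)
    (fun x y => INR n * f x y ^ pred n * fx x y)
    (fun x y => INR n * f x y ^ pred n * fy x y).
Proof.
  intros Hf; apply (C1_comp_global f fx fy (fun t => t ^ n) (fun t => INR n * t ^ pred n)); auto.
  - intros t; assert (Hd := is_derive_pow (fun u => u) n t 1 (is_derive_id t)).
    cbv beta in Hd; rewrite Rmult_1_r in Hd; exact Hd.
  - intros t; apply ex_derive_continuous_R; auto_derive; auto.
Qed.

Lemma C1_inv f fx fy : has_C1_partials U f fx fy ->
  (forall x y, U (x, y) -> f x y <> 0) ->
  has_C1_partials U (fun x y => / f x y)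
    (fun x y => - / f x y ^ 2 * fx x y) (fun x y => - / f x y ^ 2 * fy x y).
Proof.
  intros Hf Hnz; apply (C1_comp f fx fy Rinv (fun t => - / t ^ 2)); auto.
  intros x y Hxy; specialize (Hnz x y Hxy); split.
  - auto_derive; auto; field; auto.
  - apply ex_derive_continuous_R; auto_derive; auto.
Qed.

Lemma C1_sqrt f fx fy : has_C1_partials U f fx fy ->
  (forall x y, U (x, y) -> 0 < f x y) ->
  has_C1_partials U (fun x y => sqrt (f x y))
    (fun x y => / (2 * sqrt (f x y)) * fx x y) (fun x y => / (2 * sqrt (f x y)) * fy x y).
Proof.
  intros Hf Hpos; apply (C1_comp f fx fy sqrt (fun t => / (2 * sqrt t))); auto.
  intros x y Hxy; specialize (Hpos x y Hxy).
  assert (0 < sqrt (f x y)) by (apply sqrt_lt_R0; auto).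
  split.
  - auto_derive; [auto | field; lra].
  - apply ex_derive_continuous_R; auto_derive; repeat split; lra.
Qed.

Lemma C1_ln f fx fy : has_C1_partials U f fx fy ->
  (forall x y, U (x, y) -> 0 < f x y) ->
  has_C1_partials U (fun x y => ln (f x y))
    (fun x y => / f x y * fx x y) (fun x y => / f x y * fy x y).
Proof.
  intros Hf Hpos; apply (C1_comp f fx fy ln Rinv); auto.
  intros x y Hxy; specialize (Hpos x y Hxy); split.
  - auto_derive; [auto | field; lra].
  - apply ex_derive_continuous_R; auto_derive; lra.
Qed.

Lemma C1_exp f fx fy : has_C1_partials U f fx fy ->
  has_C1_partials U (fun x y => exp (f x y))
    (fun x y => exp (f x y) * fx x y) (fun x y => exp (f x y) * fy x y).
Proof.
  intros Hf; apply (C1_comp_global f fx fy exp exp); auto.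
  - intros t; auto_derive; auto; ring.
  - intros t; apply ex_derive_continuous_R; auto_derive; auto.
Qed.

Lemma C1_atan f fx fy : has_C1_partials U f fx fy ->
  has_C1_partials U (fun x y => atan (f x y))
    (fun x y => / (1 + f x y ^ 2) * fx x y) (fun x y => / (1 + f x y ^ 2) * fy x y).
Proof.
  intros Hf; apply (C1_comp_global f fx fy atan (fun t => / (1 + t ^ 2))); auto.
  - intros t; auto_derive; auto; unfold Rsqr; field; nra.
  - intros t; apply ex_derive_continuous_R; auto_derive; nra.
Qed.

Lemma C1_sin f fx fy : has_C1_partials U f fx fy ->
  has_C1_partials U (fun x y => sin (f x y))
    (fun x y => cos (f x y) * fx x y) (fun x y => cos (f x y) * fy x y).
Proof.
  intros Hf; apply (C1_comp_global f fx fy sin cos); auto.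
  - intros t; auto_derive; auto; ring.
  - intros t; apply ex_derive_continuous_R; auto_derive; auto.
Qed.

Lemma C1_cos f fx fy : has_C1_partials U f fx fy ->
  has_C1_partials U (fun x y => cos (f x y))
    (fun x y => - sin (f x y) * fx x y) (fun x y => - sin (f x y) * fy x y).
Proof.
  intros Hf; apply (C1_comp_global f fx fy cos (fun t => - sin t)); auto.
  - intros t; auto_derive; auto; ring.
  - intros t; apply ex_derive_continuous_R; auto_derive; auto.
Qed.

Lemma C1_on_of_has_C1_partials f fx fy :
  open U -> has_C1_partials U f fx fy -> C1_on U f.
Proof.
  intros HU Hf x y Hxy; destruct (Hf x y Hxy) as (fdx & fdy & _ & fxc & fyc).
  assert (Hnear : locally (x, y) U) by (apply HU; exact Hxy).
  refine (conj (ex_intro _ _ fdx) (conj (ex_intro _ _ fdy) (conj _ _))).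
  - apply (continuous_ext_loc _ (fun p : R * R => fx (fst p) (snd p))); auto.
    apply (filter_imp U); auto; intros [a b] Hab.
    symmetry; apply is_derive_unique, (Hf a b Hab).
  - apply (continuous_ext_loc _ (fun p : R * R => fy (fst p) (snd p))); auto.
    apply (filter_imp U); auto; intros [a b] Hab.
    symmetry; apply is_derive_unique, (Hf a b Hab).
Qed.

End C1_calculus.

Lemma C1_on_subset (U V : R * R -> Prop) f :
  (forall z, V z -> U z) -> C1_on U f -> C1_on V f.
Proof. intros HVU Hf x y Hxy; apply Hf, HVU, Hxy. Qed.

(* Decomposes an explicit expression in x and y by the rules above; what remains
   are the domain conditions of sqrt, ln and /. *)
Ltac C1_auto :=
  unfold Rminus, Rdiv;
  repeat lazymatch goal with
  | |- has_C1_partials _ (fun _ _ => ?c) _ _ => apply C1_const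
  | |- has_C1_partials _ (fun x _ => x) _ _ => apply C1_fst
  | |- has_C1_partials _ (fun _ y => y) _ _ => apply C1_snd
  | |- has_C1_partials _ (fun x y => @?f x y + @?g x y) _ _ => eapply (C1_add _ f _ _ g)
  | |- has_C1_partials _ (fun x y => @?f x y * @?g x y) _ _ => eapply (C1_mul _ f _ _ g)
  | |- has_C1_partials _ (fun x y => - @?f x y) _ _ => eapply (C1_opp _ f)
  | |- has_C1_partials _ (fun x y => / @?f x y) _ _ => eapply (C1_inv _ f)
  | |- has_C1_partials _ (fun x y => @?f x y ^ _) _ _ => eapply (C1_pow _ f)
  | |- has_C1_partials _ (fun x y => sqrt (@?f x y)) _ _ => eapply (C1_sqrt _ f)
  | |- has_C1_partials _ (fun x y => ln (@?f x y)) _ _ => eapply (C1_ln _ f)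
  | |- has_C1_partials _ (fun x y => exp (@?f x y)) _ _ => eapply (C1_exp _ f)
  | |- has_C1_partials _ (fun x y => atan (@?f x y)) _ _ => eapply (C1_atan _ f)
  | |- has_C1_partials _ (fun x y => sin (@?f x y)) _ _ => eapply (C1_sin _ f)
  | |- has_C1_partials _ (fun x y => cos (@?f x y)) _ _ => eapply (C1_cos _ f)
  end.

Lemma discr_root_bounds x y : 0 < x ->
  y < sqrt (y ^ 2 + 4 * x) /\ - y < sqrt (y ^ 2 + 4 * x).
Proof.
  intros Hx.
  assert (Hs := pow2_sqrt (y ^ 2 + 4 * x) ltac:(nra)).
  assert (0 <= sqrt (y ^ 2 + 4 * x)) by apply sqrt_pos.
  split; nra.
Qed.

Lemma lam1_neg x y : 0 < x -> lam1 x y < 0.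
Proof. intros Hx; destruct (discr_root_bounds x y Hx); unfold lam1; lra. Qed.

Lemma lam2_pos x y : 0 < x -> 0 < lam2 x y.
Proof. intros Hx; destruct (discr_root_bounds x y Hx); unfold lam2; lra. Qed.

Lemma lam1_add_lam2 x y : lam1 x y + lam2 x y = y.
Proof. unfold lam1, lam2; field. Qed.

Lemma lam1_mul_lam2 x y : 0 <= y ^ 2 + 4 * x -> lam1 x y * lam2 x y = - x.
Proof.
  intros Hd; unfold lam1, lam2.
  assert (Hs := pow2_sqrt _ Hd).
  replace ((y - sqrt (y ^ 2 + 4 * x)) / 2 * ((y + sqrt (y ^ 2 + 4 * x)) / 2))
    with ((y ^ 2 - sqrt (y ^ 2 + 4 * x) ^ 2) / 4) by field.
  rewrite Hs; field.
Qed.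

Definition pcoord (x y : R) : R := sqrt (- lam1 x y).
Definition qcoord (x y : R) : R := sqrt (lam2 x y).

Lemma pcoord_pos x y : 0 < x -> 0 < pcoord x y.
Proof. intros Hx; apply sqrt_lt_R0; assert (Hl := lam1_neg x y Hx); lra. Qed.

Lemma qcoord_pos x y : 0 < x -> 0 < qcoord x y.
Proof. intros Hx; apply sqrt_lt_R0, lam2_pos, Hx. Qed.

Lemma pcoord_sq x y : 0 < x -> pcoord x y ^ 2 = - lam1 x y.
Proof. intros Hx; apply pow2_sqrt; assert (Hl := lam1_neg x y Hx); lra. Qed.

Lemma qcoord_sq x y : 0 < x -> qcoord x y ^ 2 = lam2 x y.
Proof. intros Hx; apply pow2_sqrt; assert (Hl := lam2_pos x y Hx); lra. Qed.

Lemma xy_of_pqcoord x y : 0 < x ->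
  x = (pcoord x y * qcoord x y) ^ 2 /\ y = qcoord x y ^ 2 - pcoord x y ^ 2.
Proof.
  intros Hx; rewrite Rpow_mult_distr, pcoord_sq, qcoord_sq by exact Hx; split.
  - rewrite <- Ropp_mult_distr_l, lam1_mul_lam2; nra.
  - rewrite <- (lam1_add_lam2 x y) at 1; ring.
Qed.

Lemma pqcoord_of_pq p q : 0 < p -> 0 < q ->
  pcoord ((p * q) ^ 2) (q ^ 2 - p ^ 2) = p /\ qcoord ((p * q) ^ 2) (q ^ 2 - p ^ 2) = q.
Proof.
  intros Hp Hq.
  assert (Hs : sqrt ((q ^ 2 - p ^ 2) ^ 2 + 4 * (p * q) ^ 2) = p ^ 2 + q ^ 2).
  { rewrite <- (sqrt_pow2 (p ^ 2 + q ^ 2)) by nra; f_equal; ring. }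
  unfold pcoord, qcoord, lam1, lam2; rewrite Hs; split.
  - transitivity (sqrt (p ^ 2)); [f_equal; field | apply sqrt_pow2; lra].
  - transitivity (sqrt (q ^ 2)); [f_equal; field | apply sqrt_pow2; lra].
Qed.

(* (q + i p)^3 = cube_re p q + i cube_im p q *)
Definition cube_im (p q : R) : R := (3 * q ^ 2 - p ^ 2) * p.
Definition cube_re (p q : R) : R := (q ^ 2 - 3 * p ^ 2) * q.

(* The image of the open quadrant {p, q > 0} under cubing, in coordinates
   (Im, Re): the points of argument in (0, 3 PI / 2). *)
Definition cubed_quadrant (z : R * R) : Prop := 0 < fst z \/ snd z < 0.

Lemma cube_in_cubed_quadrant p q : 0 < p -> 0 < q ->
  cubed_quadrant (cube_im p q, cube_re p q).
Proof.
  intros Hp Hq; unfold cubed_quadrant, cube_im, cube_re; simpl.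
  destruct (Rlt_or_le (p ^ 2) (3 * q ^ 2)); [left | right].
  - apply Rmult_lt_0_compat; lra.
  - apply Rmult_neg_pos; nra.
Qed.

Lemma cube_inj_quadrant p q p' q' : 0 < p -> 0 < q -> 0 < p' -> 0 < q' ->
  cube_im p q = cube_im p' q' -> cube_re p q = cube_re p' q' -> p = p' /\ q = q'.
Proof.
  intros Hp Hq Hp' Hq' Eim Ere.
  (* z^3 - z'^3 = (z - z') (z^2 + z z' + z'^2) for z = q + i p, z' = q' + i p';
     the second factor has imaginary part m_im > 0. *)
  set (m_re := q ^ 2 - p ^ 2 + (q * q' - p * p') + (q' ^ 2 - p' ^ 2)).
  set (m_im := 2 * q * p + (q * p' + p * q') + 2 * q' * p').
  assert (Hre : (q - q') * m_re - (p - p') * m_im = cube_re p q - cube_re p' q')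
    by (unfold m_re, m_im, cube_re; ring).
  assert (Him : (q - q') * m_im + (p - p') * m_re = cube_im p q - cube_im p' q')
    by (unfold m_re, m_im, cube_im; ring).
  rewrite Ere, Rminus_diag in Hre; rewrite Eim, Rminus_diag in Him.
  assert (Hm : 0 < m_im).
  { unfold m_im; assert (0 < q * p) by nra; assert (0 < q * p') by nra;
    assert (0 < p * q') by nra; assert (0 < q' * p') by nra; lra. }
  assert (Hnorm : ((q - q') ^ 2 + (p - p') ^ 2) * m_im = 0).
  { replace (((q - q') ^ 2 + (p - p') ^ 2) * m_im)
      with ((q - q') * ((q - q') * m_im + (p - p') * m_re)
            - (p - p') * ((q - q') * m_re - (p - p') * m_im)) by ring.
    rewrite Hre, Him; ring. }
  destruct (Rmult_integral _ _ Hnorm) as [Hsq | Hm0]; [| lra].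
  destruct (Rplus_sqr_eq_0 (q - q') (p - p')) as [Eq Ep].
  - unfold Rsqr; lra.
  - lra.
Qed.

Lemma cube_polar rho th :
  cube_im (rho * sin th) (rho * cos th) = rho ^ 3 * sin (3 * th) /\
  cube_re (rho * sin th) (rho * cos th) = rho ^ 3 * cos (3 * th).
Proof.
  replace (3 * th) with (2 * th + th) by ring.
  rewrite sin_plus, cos_plus, sin_2a, cos_2a; unfold cube_im, cube_re; split; ring.
Qed.

Lemma sin_cos_2atan t :
  sin (2 * atan t) = 2 * t / (1 + t ^ 2) /\ cos (2 * atan t) = (1 - t ^ 2) / (1 + t ^ 2).
Proof.
  assert (Hn : sqrt (1 + t²) ^ 2 = 1 + t ^ 2).
  { rewrite pow2_sqrt; unfold Rsqr; [ring | nra]. }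
  assert (Hpos : 0 < sqrt (1 + t²)) by (apply sqrt_lt_R0; unfold Rsqr; nra).
  rewrite sin_2a, cos_2a, sin_atan, cos_atan, <- Hn; split; field; lra.
Qed.

Lemma polar_of_half_angle a b : let r := sqrt (a ^ 2 + b ^ 2) in b < r ->
  r * sin (PI - 2 * atan (a / (r - b))) = a /\ r * cos (PI - 2 * atan (a / (r - b))) = b.
Proof.
  intros r Hbr.
  assert (Hr : r ^ 2 = a ^ 2 + b ^ 2) by (apply pow2_sqrt; nra).
  assert (Hr0 : 0 < r) by (assert (0 <= r) by apply sqrt_pos; nra).
  assert (Ht : 1 + (a / (r - b)) ^ 2 = 2 * r / (r - b)).
  { replace ((a / (r - b)) ^ 2) with (a ^ 2 / (r - b) ^ 2) by (field; lra).
    replace (a ^ 2) with (r ^ 2 - b ^ 2) by lra; field; lra. }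
  rewrite sin_PI_x, Rtrigo_facts.cos_pi_minus.
  destruct (sin_cos_2atan (a / (r - b))) as [-> ->].
  rewrite Ht; replace ((a / (r - b)) ^ 2) with (2 * r / (r - b) - 1) by lra.
  clearbody r; split; field; lra.
Qed.

(* For b + i a of modulus r: root_mod a b = r^(1/3), and 3 * root_arg a b is
   its argument in (0, 3 PI / 2), written by the half-angle formula so that it
   is smooth on cubed_quadrant. *)
Definition root_mod (a b : R) : R := exp (ln (a ^ 2 + b ^ 2) / 6).
Definition root_arg (a b : R) : R :=
  (PI - 2 * atan (a / (sqrt (a ^ 2 + b ^ 2) - b))) / 3.
Definition root_p (a b : R) : R := root_mod a b * sin (root_arg a b).
Definition root_q (a b : R) : R := root_mod a b * cos (root_arg a b).

Lemma cubed_quadrant_bounds a b : cubed_quadrant (a, b) ->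
  0 < a ^ 2 + b ^ 2 /\ b < sqrt (a ^ 2 + b ^ 2) /\ -1 < a / (sqrt (a ^ 2 + b ^ 2) - b).
Proof.
  unfold cubed_quadrant; simpl; intros Hab.
  assert (Hpos : 0 < a ^ 2 + b ^ 2) by (destruct Hab; nra).
  set (r := sqrt (a ^ 2 + b ^ 2)).
  assert (Hr : r ^ 2 = a ^ 2 + b ^ 2) by (apply pow2_sqrt; lra).
  assert (0 < r) by (apply sqrt_lt_R0; lra).
  assert (Hbr : b < r) by (destruct Hab; nra).
  assert (Har : 0 < a + r - b) by (destruct Hab; nra).
  repeat split; auto.
  apply (Rmult_lt_reg_r (r - b)); [lra|].
  unfold Rdiv; rewrite Rmult_assoc, Rinv_l; lra.
Qed.

Lemma root_mod_cube a b : 0 < a ^ 2 + b ^ 2 -> root_mod a b ^ 3 = sqrt (a ^ 2 + b ^ 2).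
Proof.
  intros Hpos; unfold root_mod; rewrite <- Rpower_sqrt by exact Hpos; unfold Rpower.
  set (l := ln (a ^ 2 + b ^ 2)).
  change (exp (l / 6) ^ 3) with (exp (l / 6) * (exp (l / 6) * (exp (l / 6) * 1))).
  rewrite Rmult_1_r, <- !exp_plus; f_equal; field.
Qed.

Lemma root_arg_bounds a b : cubed_quadrant (a, b) -> 0 < root_arg a b < PI / 2.
Proof.
  intros Hab; destruct (cubed_quadrant_bounds a b Hab) as (_ & _ & Ht).
  assert (Hlow : - (PI / 4) < atan (a / (sqrt (a ^ 2 + b ^ 2) - b))).
  { rewrite <- atan_1, <- atan_opp; apply atan_increasing; lra. }
  assert (Hhigh := atan_bound (a / (sqrt (a ^ 2 + b ^ 2) - b))).
  unfold root_arg; lra.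
Qed.

Lemma root_pq_pos a b : cubed_quadrant (a, b) -> 0 < root_p a b /\ 0 < root_q a b.
Proof.
  intros Hab; destruct (root_arg_bounds a b Hab) as [H0 H1].
  assert (Hmod : 0 < root_mod a b) by apply exp_pos.
  assert (HPI := PI_RGT_0).
  split; apply Rmult_lt_0_compat; auto.
  - apply sin_gt_0; lra.
  - apply cos_gt_0; lra.
Qed.

Lemma cube_root_spec a b : cubed_quadrant (a, b) ->
  cube_im (root_p a b) (root_q a b) = a /\ cube_re (root_p a b) (root_q a b) = b.
Proof.
  intros Hab; destruct (cubed_quadrant_bounds a b Hab) as (Hpos & Hbr & _).
  unfold root_p, root_q; rewrite !(proj1 (cube_polar _ _)), !(proj2 (cube_polar _ _)).
  rewrite root_mod_cube by exact Hpos.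
  replace (3 * root_arg a b) with (PI - 2 * atan (a / (sqrt (a ^ 2 + b ^ 2) - b)))
    by (unfold root_arg; field).
  exact (polar_of_half_angle a b Hbr).
Qed.

Definition w1 (x y : R) : R := cube_im (pcoord x y) (qcoord x y).
Definition w2 (x y : R) : R := cube_re (pcoord x y) (qcoord x y).
Definition g1 (a b : R) : R := (root_p a b * root_q a b) ^ 2.
Definition g2 (a b : R) : R := root_q a b ^ 2 - root_p a b ^ 2.

Lemma w_in_cubed_quadrant x y : 0 < x -> cubed_quadrant (w1 x y, w2 x y).
Proof. intros Hx; apply cube_in_cubed_quadrant; [apply pcoord_pos | apply qcoord_pos]; exact Hx. Qed.

Lemma w_g a b : cubed_quadrant (a, b) ->
  Omega (g1 a b, g2 a b) /\ w1 (g1 a b) (g2 a b) = a /\ w2 (g1 a b) (g2 a b) = b.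
Proof.
  intros Hab; destruct (root_pq_pos a b Hab) as [Hp Hq].
  destruct (pqcoord_of_pq _ _ Hp Hq) as [Ep Eq].
  unfold Omega, w1, w2, g1, g2; cbn [fst]; rewrite Ep, Eq.
  split; [apply pow_lt, Rmult_lt_0_compat; assumption | exact (cube_root_spec a b Hab)].
Qed.

Lemma g_w x y : 0 < x -> g1 (w1 x y) (w2 x y) = x /\ g2 (w1 x y) (w2 x y) = y.
Proof.
  intros Hx; assert (Hw := w_in_cubed_quadrant x y Hx).
  destruct (root_pq_pos _ _ Hw) as [Hp Hq].
  destruct (cube_root_spec _ _ Hw) as [Eim Ere].
  destruct (cube_inj_quadrant _ _ _ _ Hp Hq (pcoord_pos x y Hx) (qcoord_pos x y Hx) Eim Ere)
    as [Ep Eq].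
  destruct (xy_of_pqcoord x y Hx) as [Ex Ey].
  unfold g1, g2; rewrite Ep, Eq; auto.
Qed.

Lemma image_w z : image2 Omega w1 w2 z <-> cubed_quadrant z.
Proof.
  split.
  - intros [[x y] [Hxy ->]]; exact (w_in_cubed_quadrant x y Hxy).
  - destruct z as [a b]; intros Hab; destruct (w_g a b Hab) as (HO & Ea & Eb).
    exists (g1 a b, g2 a b); simpl; rewrite Ea, Eb; auto.
Qed.

Lemma open_Omega : open Omega.
Proof.
  apply (open_comp fst (fun u => 0 < u)); [| apply open_gt].
  intros z _; apply continuous_fst.
Qed.

Lemma open_cubed_quadrant : open cubed_quadrant.
Proof.
  apply open_or.
  - apply (open_comp fst (fun u => 0 < u)); [| apply open_gt].
    intros z _; apply continuous_fst.
  - apply (open_comp snd (fun u => u < 0)); [| apply open_lt].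
    intros z _; apply continuous_snd.
Qed.

Lemma w_C1 : C1_on Omega w1 /\ C1_on Omega w2.
Proof.
  split; eapply C1_on_of_has_C1_partials; try apply open_Omega;
    cbv beta delta [w1 w2 cube_im cube_re pcoord qcoord lam1 lam2]; C1_auto;
    intros x y Hx; unfold Omega in Hx; simpl in Hx;
    destruct (discr_root_bounds x y Hx); nra.
Qed.

Lemma g_C1 : C1_on cubed_quadrant g1 /\ C1_on cubed_quadrant g2.
Proof.
  split; eapply C1_on_of_has_C1_partials; try apply open_cubed_quadrant;
    cbv beta delta [g1 g2 root_p root_q root_mod root_arg]; C1_auto;
    intros a b Hab; destruct (cubed_quadrant_bounds a b Hab) as (Hpos & Hbr & _); lra.
Qed.

Lemma w_partials x y : 0 < x ->
  is_derive (fun t => w1 t y) x (3 / (2 * pcoord x y)) /\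
  is_derive (fun t => w1 x t) y (3 * pcoord x y / 2) /\
  is_derive (fun t => w2 t y) x (- 3 / (2 * qcoord x y)) /\
  is_derive (fun t => w2 x t) y (3 * qcoord x y / 2).
Proof.
  intros Hx; destruct (discr_root_bounds x y Hx) as [Hys Hys'].
  unfold w1, w2, cube_im, cube_re, pcoord, qcoord, lam1, lam2, Rminus, Rdiv in *.
  cbn [pow] in *.
  refine (conj _ (conj _ (conj _ _))); auto_derive; try (repeat split; nra).
  all: set (s := sqrt (y * (y * 1) + 4 * x)) in *.
  all: set (p := sqrt (- ((y + - s) * / 2))) in *.
  all: set (q := sqrt ((y + s) * / 2)) in *.
  all: assert (Hp : 0 < p) by (apply sqrt_lt_R0; lra).
  all: assert (Hq : 0 < q) by (apply sqrt_lt_R0; lra).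
  all: assert (Hp2 : p * p = - ((y + - s) * / 2)) by (apply sqrt_sqrt; lra).
  all: assert (Hq2 : q * q = (y + s) * / 2) by (apply sqrt_sqrt; lra).
  all: clearbody s p q.
  (* s = p^2 + q^2 and y = q^2 - p^2 make every partial a rational function of p, q. *)
  all: assert (Es : s = p * p + q * q) by lra; assert (Ey : y = q * q - p * p) by lra.
  all: subst s y; field; lra.
Qed.

Lemma w_diffeo : diffeo_onto_image Omega w1 w2.
Proof.
  destruct w_C1 as [Hw1 Hw2]; destruct g_C1 as [Hg1 Hg2].
  assert (Himg : forall z, image2 Omega w1 w2 z -> cubed_quadrant z)
    by (intros z; apply image_w).
  refine (conj open_Omega (conj Hw1 (conj Hw2 (conj _ _)))).
  - apply (open_ext cubed_quadrant); [intros z; symmetry; apply image_w |].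
    exact open_cubed_quadrant.
  - exists g1, g2; refine (conj _ (conj _ (conj _ _))).
    + exact (C1_on_subset _ _ _ Himg Hg1).
    + exact (C1_on_subset _ _ _ Himg Hg2).
    + intros [x y] Hx; exact (g_w x y Hx).
    + intros [a b] Hab; exact (w_g a b (Himg _ Hab)).
Qed.

Lemma w_riemann_invariants x y : 0 < x ->
  grad_dot w1 x y (r1 x y) = 0 /\ grad_dot w2 x y (r2 x y) = 0 /\
  pd1 w1 x y > 0 /\ pd1 w2 x y < 0.
Proof.
  intros Hx; assert (Hp := pcoord_pos x y Hx); assert (Hq := qcoord_pos x y Hx).
  destruct (w_partials x y Hx) as (D1x & D1y & D2x & D2y).
  unfold grad_dot, r1, r2; cbn [fst snd].
  replace (pd1 w1 x y) with (3 / (2 * pcoord x y)) by (symmetry; exact (is_derive_unique _ _ _ D1x)).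
  replace (pd2 w1 x y) with (3 * pcoord x y / 2) by (symmetry; exact (is_derive_unique _ _ _ D1y)).
  replace (pd1 w2 x y) with (- 3 / (2 * qcoord x y)) by (symmetry; exact (is_derive_unique _ _ _ D2x)).
  replace (pd2 w2 x y) with (3 * qcoord x y / 2) by (symmetry; exact (is_derive_unique _ _ _ D2y)).
  replace (lam1 x y) with (- pcoord x y ^ 2) by (rewrite pcoord_sq; [ring | exact Hx]).
  rewrite <- (qcoord_sq x y Hx).
  repeat split.
  - field; lra.
  - field; lra.
  - apply Rdiv_lt_0_compat; lra.
  - unfold Rdiv; apply Rmult_neg_pos; [lra | apply Rinv_0_lt_compat; lra].
Qed.

Theorem lemma3p1 :
  exists w1 w2 : R -> R -> R,
    diffeo_onto_image Omega w1 w2 /\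
    (forall z1 z2, Omega (z1, z2) ->
       grad_dot w1 z1 z2 (r1 z1 z2) = 0 /\
       grad_dot w2 z1 z2 (r2 z1 z2) = 0 /\
       pd1 w1 z1 z2 > 0 /\
       pd1 w2 z1 z2 < 0).
Proof.
  exists w1, w2; split.
  - exact w_diffeo.
  - intros z1 z2 Hz; exact (w_riemann_invariants z1 z2 Hz).
Qed.
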